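(* Every semicommutative ring is almost Armendariz.
   Context: All rings are associative with identity. A ring $R$ is semicommutative if for all $a,b\in R$, $ab=0$ implies $aRb=0$. For a ring $R$, $P(R)$ denotes the prime radical of $R$ (the intersection of all prime ideals of $R$, equivalently the set of strongly nilpotent elements of $R$). A ring $R$ is called almost Armendariz if whenever $f(x)=\sum_{i=0}^m a_ix^i$ and $g(x)=\sum_{j=0}^n b_jx^j\in R[x]$ satisfy $f(x)g(x)=0$, then $a_ib_j\in P(R)$ for all $0\le i\le m$, $0\le j\le n$. *)

From HB Require Import structures.
From mathcomp Require Import all_boot all_order all_algebra.
Set Implicit Arguments. Unset Strict Implicit. Unset Printing Implicit Defensive.
Import GRing.Theory.
Local Open Scope ring_scope.

Definition semicommutative (R : nzRingType) : Prop :=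
  forall a b : R, a * b = 0 -> forall r : R, a * r * b = 0.

Definition is_ideal (R : nzRingType) (I : R -> Prop) : Prop :=
  [/\ I 0,
      (forall x y, I x -> I y -> I (x - y)),
      (forall r x, I x -> I (r * x)) &
      (forall r x, I x -> I (x * r))].

(* Prime ideal (noncommutative sense): a proper two-sided ideal P such that
   for all ideals A, B with AB ⊆ P, A ⊆ P or B ⊆ P.  (AB ⊆ P iff all
   products ab, a ∈ A, b ∈ B, lie in P.) *)
Definition is_prime_ideal (R : nzRingType) (P : R -> Prop) : Prop :=
  [/\ is_ideal P,
      ~ P 1 &
      (forall A B : R -> Prop, is_ideal A -> is_ideal B ->
         (forall a b, A a -> B b -> P (a * b)) ->
         (forall a, A a -> P a) \/ (forall b, B b -> P b))].

Definition prime_radical (R : nzRingType) (x : R) : Prop :=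
  forall P : R -> Prop, is_prime_ideal P -> P x.

Definition almost_armendariz (R : nzRingType) : Prop :=
  forall f g : {poly R}, f * g = 0 ->
    forall i j : nat, (i < size f)%N -> (j < size g)%N ->
      prime_radical (f`_i * g`_j).

(* In a semicommutative ring the nilpotent elements form an ideal N, closed
   moreover under u v |-> u r v and x^2 |-> x.  For any ideal with these two
   closure properties, induction on g = g' X + c (first showing f_i c in the
   ideal by induction on i) proves: if every coefficient of f g lies in the
   ideal, so does every product a_i b_j.  Applied to f g = 0 and N, each a_i b_j
   is nilpotent.  Finally a nilpotent x lies in every prime ideal P: if
   z x^(j+1) = 0 then z R x x^j = 0 by semicommutativity, so descending on j
   and using primeness, x not in P would force 1 in P. *)
From mathcomp Require Import all_boot all_order all_algebra.
From Stdlib Require Import Classical.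
Set Implicit Arguments. Unset Strict Implicit. Unset Printing Implicit Defensive.
Import GRing.Theory.
Local Open Scope ring_scope.

Definition nilpotent (R : nzRingType) (x : R) : Prop := exists n, x ^+ n = 0.

Lemma nilpotent0 (R : nzRingType) : nilpotent (0 : R).
Proof. by exists 1%N; rewrite expr1. Qed.

Lemma exprS_mul_swap (R : nzRingType) (a b : R) n :
  (a * b) ^+ n.+1 = a * (b * a) ^+ n * b.
Proof.
elim: n => [|n IHn]; first by rewrite expr1 expr0 mulr1.
by rewrite exprS IHn exprS !mulrA.
Qed.

Lemma nilpotent_mulC (R : nzRingType) (a b : R) :
  nilpotent (a * b) -> nilpotent (b * a).
Proof. by case=> n abn0; exists n.+1; rewrite exprS_mul_swap abn0 mulr0 mul0r. Qed.

Lemma nilpotent_sqr (R : nzRingType) (x : R) : nilpotent (x * x) -> nilpotent x.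
Proof. by case=> n xxn0; exists (2 * n)%N; rewrite exprM expr2. Qed.

Lemma idealDr (R : nzRingType) (I : R -> Prop) (x y : R) :
  is_ideal I -> I x -> I (y + x) <-> I y.
Proof.
case=> I0 IB _ _ Ix; have Inx : I (- x) by rewrite -sub0r; apply: IB.
split=> [Iyx | Iy]; first by rewrite -(addrK x y); apply: IB.
by rewrite -(opprK x); apply: IB.
Qed.

Lemma ideal_sum (R : nzRingType) (I : R -> Prop) (T : Type) (r : seq T)
    (P : pred T) (F : T -> R) :
  is_ideal I -> (forall i, P i -> I (F i)) -> I (\sum_(i <- r | P i) F i).
Proof.
move=> idealI IF; apply: big_ind => //; first by case: idealI.
by move=> x y Ix Iy; apply/(idealDr _ idealI).
Qed.

Lemma prime_ideal_elementwise (R : nzRingType) (P : R -> Prop) :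
  is_prime_ideal P ->
  forall u v : R, (forall r, P (u * r * v)) -> P u \/ P v.
Proof.
case=> [[P0 PB PL PR] _ Pprime] u v uRv.
pose A z := forall r, P (z * r * v).
pose B w := forall z, A z -> forall r, P (z * r * w).
have idealA : is_ideal A.
  split=> [r | x y Ax Ay r | t x Ax r | t x Ax r].
  - by rewrite !mul0r.
  - by rewrite !mulrBl; apply: PB.
  - by rewrite -!mulrA; apply: PL; rewrite !mulrA.
  - by rewrite -(mulrA x t r); apply: Ax.
have idealB : is_ideal B.
  split=> [z _ r | x y Bx By z Az r | t x Bx z Az r | t x Bx z Az r].
  - by rewrite mulr0.
  - by rewrite mulrBr; apply: PB; [apply: Bx | apply: By].
  - by rewrite mulrA -(mulrA z r t); apply: Bx.
  - by rewrite mulrA; apply: PR; apply: Bx.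
have AB_P a b : A a -> B b -> P (a * b) by move=> Aa /(_ a Aa 1); rewrite mulr1.
case: (Pprime A B idealA idealB AB_P) => [PA | PB'].
- by left; apply: PA.
- by right; apply: PB' => z Az r; apply: Az.
Qed.

Section Semicommutative.

Variable R : nzRingType.
Hypothesis semicommR : semicommutative R.

Lemma semicomm_mul_expr (w z r : R) n :
  w * z ^+ n = 0 -> w * (z * r) ^+ n = 0.
Proof.
elim: n w => [|n IHn] w; first by rewrite !expr0.
rewrite exprS mulrA => /IHn /semicommR /(_ r).
by rewrite exprS !mulrA.
Qed.

Lemma semicomm_mul_exprD (w x y : R) a b :
  w * x ^+ a = 0 -> w * y ^+ b = 0 -> w * (x + y) ^+ (a + b) = 0.
Proof.
elim: a b w => [|a IHa] b w; first by rewrite expr0 mulr1 => ->; rewrite !mul0r.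
elim: b w => [|b IHb] w; first by move=> _; rewrite expr0 mulr1 => ->; rewrite !mul0r.
move=> wxa0 wyb0.
have wx_x : w * x * x ^+ a = 0 by rewrite -mulrA -exprS.
have wy_y : w * y * y ^+ b = 0 by rewrite -mulrA -exprS.
rewrite addSn exprS mulrA mulrDr mulrDl.
rewrite (IHa b.+1 (w * x) wx_x (semicommR wyb0 x)) add0r addnS -addSn.
exact: IHb (semicommR wxa0 y) wy_y.
Qed.

Lemma nilpotentD (x y : R) : nilpotent x -> nilpotent y -> nilpotent (x + y).
Proof.
case=> a xa0 [b yb0]; exists (a + b)%N.
by rewrite -[_ ^+ _]mul1r semicomm_mul_exprD ?mul1r.
Qed.

Lemma nilpotentMr (z r : R) : nilpotent z -> nilpotent (z * r).
Proof.
case=> n zn0; exists n.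
by rewrite -[_ ^+ _]mul1r semicomm_mul_expr ?mul1r.
Qed.

Lemma nilpotentMl (r z : R) : nilpotent z -> nilpotent (r * z).
Proof. by move=> /(nilpotentMr r) /nilpotent_mulC. Qed.

Lemma nilpotent_ideal : is_ideal (@nilpotent R).
Proof.
split=> [|x y nx [m ym0]|r x|r x].
- exact: nilpotent0.
- by apply: nilpotentD => //; exists m; rewrite exprNn ym0 mulr0.
- exact: nilpotentMl.
- exact: nilpotentMr.
Qed.

Lemma nilpotent_sandwich (u v r : R) :
  nilpotent (u * v) -> nilpotent (u * r * v).
Proof.
move=> /nilpotent_mulC /(nilpotentMr r) nvur.
by apply: nilpotent_mulC; rewrite mulrA.
Qed.

Lemma nilpotent_prime_ideal (P : R -> Prop) (x : R) :
  is_prime_ideal P -> nilpotent x -> P x.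
Proof.
move=> Pprime [n xn0]; case: (classic (P x)) => // notPx.
have annP j z : z * x ^+ j = 0 -> P z.
  elim: j z => [|j IHj] z.
    by rewrite expr0 mulr1 => ->; case: Pprime => [[]].
  move=> zxj0.
  have zRx r : P (z * r * x).
    by apply: IHj; rewrite -mulrA -exprS; apply: semicommR.
  by case: (prime_ideal_elementwise Pprime zRx).
have := annP n 1; rewrite mul1r => /(_ xn0).
by case: Pprime.
Qed.

End Semicommutative.

Section IdealCoefficients.

Variables (R : nzRingType) (I : R -> Prop).
Hypotheses (idealI : is_ideal I)
  (I_sandwich : forall u v r, I (u * v) -> I (u * r * v))
  (I_sqr : forall x, I (x * x) -> I x).

Lemma coef_mul_ideal_const (f g : {poly R}) :
  (forall k, I ((f * g)`_k)) -> forall i, I (f`_i * g`_0).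
Proof.
move=> Ifg; elim/ltn_ind=> i IHi.
have Ifg_c : I ((f * g)`_i * g`_0) by case: idealI => _ _ _; apply.
set lower := \sum_(l < i) f`_l * g`_(i - l) * g`_0.
have Ilower : I lower.
  by apply: ideal_sum => // l _; apply: I_sandwich; apply: IHi.
have Ifcc : I (f`_i * g`_0 * g`_0).
  move: Ifg_c; rewrite coefM big_ord_recr /= subnn mulrDl mulr_suml -/lower.
  by rewrite addrC => /(idealDr _ idealI Ilower).
by apply: I_sqr; rewrite mulrA; apply: I_sandwich.
Qed.

Lemma coef_mul_ideal (f g : {poly R}) :
  (forall k, I ((f * g)`_k)) -> forall i j, I (f`_i * g`_j).
Proof.
elim/poly_ind: g => [|g c IHg] Ifg i j.
  by rewrite coef0 mulr0; case: idealI.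
have Ifc k : I (f`_k * c).
  by have := coef_mul_ideal_const Ifg k; rewrite coefD coefMX coefC /= add0r.
have Ifg' k : I ((f * g)`_k).
  have := Ifg k.+1; rewrite mulrDr mulrA coefD coefMX /= coefMC.
  by move/(idealDr _ idealI (Ifc _)).
case: j => [|j]; first by have := Ifc i; rewrite coefD coefMX coefC /= add0r.
by rewrite coefD coefMX coefC /= addr0; apply: IHg.
Qed.

End IdealCoefficients.

Theorem proposition2p8 (R : nzRingType) :
  semicommutative R -> almost_armendariz R.
Proof.
move=> semicommR f g fg0 i j _ _ P Pprime.
apply: (nilpotent_prime_ideal semicommR Pprime).
apply: (coef_mul_ideal (nilpotent_ideal semicommR) (nilpotent_sandwich semicommR)
  (@nilpotent_sqr R)) => k.
by rewrite fg0 coef0; apply: nilpotent0.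
Qed.
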